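(* Let $\mathcal{T}=\langle\Sigma^*\times\mathcal{M},Q,I,F,\Delta\rangle$ be a real-time monoidal finite-state transducer with output monoid $\mathcal{M}=\langle M,\circ,e\rangle$. Let $\mathcal{A}^{sq}=\langle\mathcal{M}\times\mathcal{M},Q\times Q,I\times I,F\times F,\Delta_{sq}\rangle$ where $\Delta_{sq}=\{\langle\langle p_1,p_2\rangle,\langle m_1,m_2\rangle,\langle q_1,q_2\rangle\rangle:\exists a\in\Sigma\ \langle p_i,\langle a,m_i\rangle,q_i\rangle\in\Delta\text{ for }i=1,2\}$. Then $\mathcal{A}^{sq}$ is a squared output automaton for $\mathcal{T}$.
   Context: A real-time monoidal finite-state transducer has finite $\Delta\subseteq Q\times(\Sigma\times M)\times Q$. For a monoidal automaton with transition relation $\Delta$ over a monoid with unit $e$, the generalized transition relation $\Delta^*$ is the least set containing $\langle q,e,q\rangle$ for every state $q$ and closed under: $\langle q_1,w,q_2\rangle\in\Delta^*$, $\langle q_2,a,q_3\rangle\in\Delta$ imply $\langle q_1,w\circ a,q_3\rangle\in\Delta^*$ (for the transducer the unit is $\langle\varepsilon,e\rangle$; for $\mathcal{M}\times\mathcal{M}$ it is $\langle e,e\rangle$ with componentwise product). A monoidal automaton $\langle\mathcal{M}\times\mathcal{M},Q\times Q,I\times I,F\times F,\Delta_2\rangle$ with finite $\Delta_2$ is a squared output automaton for $\mathcal{T}$ if for all $p_1,p_2,q_1,q_2\in Q$ and $m,n\in M$: $\langle\langle p_1,p_2\rangle,\langle m,n\rangle,\langle q_1,q_2\rangle\rangle\in\Delta_2^*$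 iff there is $u\in\Sigma^*$ with $\langle p_1,\langle u,m\rangle,q_1\rangle\in\Delta^*$ and $\langle p_2,\langle u,n\rangle,q_2\rangle\in\Delta^*$. *)

From Stdlib Require Import List FinFun.
Import ListNotations.
Set Implicit Arguments.

Definition is_monoid (M : Type) (op : M -> M -> M) (e : M) : Prop :=
  (forall x y z, op (op x y) z = op x (op y z)) /\
  (forall x, op e x = x) /\ (forall x, op x e = x).

Definition finite_rel (A B C : Type) (R : A -> B -> C -> Prop) : Prop :=
  exists l : list (A * B * C), forall a b c, R a b c <-> In (a, b, c) l.

Record monoidal_automaton (L S : Type) := MkMA {
  ma_init : S -> Prop;
  ma_final : S -> Prop;
  ma_delta : S -> L -> S -> Prop }.

Inductive gen_trans (L S : Type) (op : L -> L -> L) (unit : L)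
    (D : S -> L -> S -> Prop) : S -> L -> S -> Prop :=
| gt_refl q : gen_trans op unit D q unit q
| gt_step q1 w q2 a q3 :
    gen_trans op unit D q1 w q2 -> D q2 a q3 -> gen_trans op unit D q1 (op w a) q3.

Record rt_transducer (Sigma Q M : Type) := MkRT {
  t_init : Q -> Prop;
  t_final : Q -> Prop;
  t_delta : Q -> Sigma * M -> Q -> Prop }.

Definition rt_transducer_ok (Sigma Q M : Type) (op : M -> M -> M) (e : M)
    (T : rt_transducer Sigma Q M) : Prop :=
  Finite Sigma /\ Finite Q /\ is_monoid op e /\ finite_rel (t_delta T).

Definition tmul (Sigma M : Type) (op : M -> M -> M)
    (x y : list Sigma * M) : list Sigma * M :=
  (fst x ++ fst y, op (snd x) (snd y)).

Definition t_delta_word (Sigma Q M : Type) (T : rt_transducer Sigma Q M)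
    (p : Q) (x : list Sigma * M) (q : Q) : Prop :=
  exists a, fst x = [a] /\ t_delta T p (a, snd x) q.

Definition t_star (Sigma Q M : Type) (op : M -> M -> M) (e : M)
    (T : rt_transducer Sigma Q M) : Q -> list Sigma * M -> Q -> Prop :=
  gen_trans (tmul op) ([], e) (t_delta_word T).

Definition pmul (M : Type) (op : M -> M -> M) (x y : M * M) : M * M :=
  (op (fst x) (fst y), op (snd x) (snd y)).

Definition squared_output_automaton (Sigma Q M : Type) (op : M -> M -> M) (e : M)
    (T : rt_transducer Sigma Q M) (A : monoidal_automaton (M * M) (Q * Q)) : Prop :=
  (forall p, ma_init A p <-> t_init T (fst p) /\ t_init T (snd p)) /\
  (forall p, ma_final A p <-> t_final T (fst p) /\ t_final T (snd p)) /\
  finite_rel (ma_delta A) /\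
  (forall p1 p2 q1 q2 m n,
     gen_trans (pmul op) (e, e) (ma_delta A) (p1, p2) (m, n) (q1, q2) <->
     exists u : list Sigma,
       t_star op e T p1 (u, m) q1 /\ t_star op e T p2 (u, n) q2).

Definition delta_sq (Sigma Q M : Type) (T : rt_transducer Sigma Q M)
    (p : Q * Q) (m : M * M) (q : Q * Q) : Prop :=
  exists a : Sigma, t_delta T (fst p) (a, fst m) (fst q) /\
                    t_delta T (snd p) (a, snd m) (snd q).

Definition A_sq (Sigma Q M : Type) (T : rt_transducer Sigma Q M)
  : monoidal_automaton (M * M) (Q * Q) :=
  MkMA (fun p => t_init T (fst p) /\ t_init T (snd p))
       (fun p => t_final T (fst p) /\ t_final T (snd p))
       (delta_sq T).

(** Both generalized transition relations are generated by appending one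
    transition at a time on the right, so a run of [A_sq] is exactly a pair of
    runs of [T] that read the same letter at every step: induction on either
    run, peeling off its last transition, matches it with the other one.  No
    monoid law is needed for this.  Finiteness of [delta_sq] holds because
    each of its transitions is assembled from a pair of transitions of [T]. *)

From Stdlib Require Import List FinFun Classical.
Import ListNotations.
Set Implicit Arguments.
Unset Strict Implicit.

Lemma listable_of_sub_list (A : Type) (P : A -> Prop) (l : list A) :
  (forall x, P x -> In x l) -> exists l', forall x, P x <-> In x l'.
Proof.
  revert P; induction l as [|a l IH]; intros P HP.
  - exists []; intros x; split; [apply HP | intros []].
  - destruct (IH (fun x => P x /\ x <> a)) as [l' Hl'].
    { intros x [Px Hxa]; destruct (HP x Px); [congruence | assumption]. }
    destruct (classic (P a)) as [Pa | nPa].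
    + exists (a :: l'); intros x; simpl; rewrite <- Hl'; split.
      * intros Px; destruct (classic (x = a)); auto.
      * intros [<- | [Px _]]; assumption.
    + exists l'; intros x; rewrite <- Hl'; split.
      * intros Px; split; [assumption | intros ->; contradiction].
      * intros [Px _]; assumption.
Qed.

Section SquaredAutomaton.

Variables (Sigma Q M : Type) (op : M -> M -> M) (e : M).
Variable T : rt_transducer Sigma Q M.

Notation t_star := (t_star op e T).
Notation sq_star := (gen_trans (pmul op) (e, e) (delta_sq T)).

Lemma finite_rel_delta_sq : finite_rel (t_delta T) -> finite_rel (delta_sq T).
Proof.
  intros [l Hl].
  pose (pair_up (t : (Q * (Sigma * M) * Q) * (Q * (Sigma * M) * Q)) :=
    match t with ((p1, (_, m1), q1), (p2, (_, m2), q2)) =>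
      ((p1, p2), (m1, m2), (q1, q2)) end).
  destruct (@listable_of_sub_list _ (fun t => let '(p, m, q) := t in delta_sq T p m q)
              (map pair_up (list_prod l l))) as [l' Hl'].
  - intros [[[p1 p2] [m1 m2]] [q1 q2]] [a [D1 D2]].
    apply in_map_iff.
    exists ((p1, (a, m1), q1), (p2, (a, m2), q2)); split; [reflexivity |].
    apply in_prod; apply Hl; assumption.
  - exists l'; intros p m q; exact (Hl' (p, m, q)).
Qed.

Lemma t_star_snoc p u w q a b q' :
  t_star p (u, w) q -> t_delta T q (a, b) q' -> t_star p (u ++ [a], op w b) q'.
Proof.
  intros Hrun Hd.
  change (u ++ [a], op w b) with (tmul op (u, w) ([a], b)).
  apply gt_step with q; [exact Hrun | exists a; split; [reflexivity | exact Hd]].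
Qed.

Lemma t_star_nil_inv p m q : t_star p ([], m) q -> m = e /\ q = p.
Proof.
  intros Hrun; remember ([], m) as x eqn:Hx.
  destruct Hrun as [q0 | q1 w q2 y q3 _ [a [Ha _]]].
  - injection Hx as ->; split; reflexivity.
  - unfold tmul in Hx; rewrite Ha in Hx; injection Hx as Hnil _.
    destruct (fst w); discriminate.
Qed.

Lemma t_star_snoc_inv p u a m q' :
  t_star p (u ++ [a], m) q' ->
  exists q w b, t_star p (u, w) q /\ t_delta T q (a, b) q' /\ m = op w b.
Proof.
  intros Hrun; remember (u ++ [a], m) as x eqn:Hx.
  destruct Hrun as [q0 | q1 [v w] q y q3 Hpre [c [Hc Hd]]].
  - injection Hx as Hu _; destruct u; discriminate.
  - unfold tmul in Hx; simpl in Hx; rewrite Hc in Hx; injection Hx as Hu <-.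
    apply app_inj_tail in Hu as [<- <-].
    exists q, w, (snd y); auto.
Qed.

Lemma sq_star_proj P mn R :
  sq_star P mn R ->
  exists u, t_star (fst P) (u, fst mn) (fst R) /\ t_star (snd P) (u, snd mn) (snd R).
Proof.
  induction 1 as [P | P mn R mn' R' _ [u [Hrun1 Hrun2]] [a [Hd1 Hd2]]].
  - exists []; split; constructor.
  - exists (u ++ [a]); split; [exact (t_star_snoc Hrun1 Hd1) | exact (t_star_snoc Hrun2 Hd2)].
Qed.

Lemma sq_star_of_t_star p1 x q1 :
  t_star p1 x q1 -> forall p2 n q2,
  t_star p2 (fst x, n) q2 -> sq_star (p1, p2) (snd x, n) (q1, q2).
Proof.
  induction 1 as [q | q1 w r1 x r1' _ IH [a [Ha Hd1]]]; intros p2 n q2 Hrun2.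
  - destruct (t_star_nil_inv Hrun2) as [-> ->]; constructor.
  - change (t_star p2 (fst w ++ fst x, n) q2) in Hrun2; rewrite Ha in Hrun2.
    destruct (t_star_snoc_inv Hrun2) as [r2 [w2 [b [Hpre2 [Hd2 ->]]]]].
    change (snd (tmul op w x), op w2 b) with (pmul op (snd w, w2) (snd x, b)).
    apply gt_step with (r1, r2); [exact (IH _ _ _ Hpre2) | exists a; split; assumption].
Qed.

End SquaredAutomaton.

Theorem proposition2 (Sigma Q M : Type) (op : M -> M -> M) (e : M)
    (T : rt_transducer Sigma Q M) :
  rt_transducer_ok op e T ->
  squared_output_automaton op e T (A_sq T).
Proof.
  intros [_ [_ [_ Hfin]]].
  split; [reflexivity |].
  split; [reflexivity |].
  split; [exact (finite_rel_delta_sq Hfin) |].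
  intros p1 p2 q1 q2 m n; split.
  - intros Hsq; exact (sq_star_proj Hsq).
  - intros [u [Hrun1 Hrun2]]; exact (sq_star_of_t_star Hrun1 Hrun2).
Qed.
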